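(* Let $\mathcal P$ be a Fitting program over a bilattice $\mathcal B$ and $\alpha\in\{\mathcal F,\mathcal T,\mathcal U,\mathcal I\}$. Then $\Psi'^{\alpha}_{\mathcal P}$ has two extreme oscillation points under the truth ordering, denoted $Fix^{\alpha}_{\mathcal F}$ and $Fix^{\alpha}_{\mathcal T}$, and $Fix^{\alpha}_{\mathcal F}\le_t Fix^{\alpha}_{\mathcal T}$.
   Context: A bilattice $\langle\mathcal B,\le_t,\le_k\rangle$ is a nonempty set with two partial orders, each making $\mathcal B$ a lattice with top and bottom. Under $\le_t$, meet and join are $\wedge,\vee$ (infinitary $\bigwedge,\bigvee$), bottom $\mathcal F$, top $\mathcal T$; under $\le_k$, meet and join are $\otimes,\oplus$ (infinitary $\bigotimes,\bigoplus$), bottom $\mathcal U$, top $\mathcal I$. Standing assumptions: $\mathcal B$ is complete for both orders, infinitely distributive, satisfies the infinitary interlacing conditions, and has a negation $\neg$ (an involution reversing $\le_t$ and preserving $\le_k$). A formula is built from literals ($A$ or $\neg A$) and elements of $\mathcal B$ using $\wedge,\vee,\otimes,\oplus,\exists,\forall$ (with built-in predicate $equal$). A clause is $P(x_1,\dots,x_n)\leftarrow\phi(x_1,\dots,x_n)$ with the body's free variables among $x_1,\dots,x_n$. A Fitting program is a finite set of clauses with no predicate letter heading more than one clause; Inst-$\mathcal P$ is its set of ground instances. $\mathcal V(\mathcal B)$: maps from ground atoms to $\mathcal B$ with pointwise orders/operations. Valuations extend to closed formulas compositionally ($v(\beta)=\beta$, connectives pointwise, $\exists$ as $\bigvee$,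 $\forall$ as $\bigwedge$ over closed-term instances, $v(equal(s,t))=\mathcal T$ if $s=t$ else $\mathcal F$). The contrajoin $v\bigtriangleup w$ evaluates likewise but gives $A$ the value $v(A)$ and $\neg A$ the value $\neg w(A)$. $\Psi_{\mathcal P}^{\alpha}(v,w)(A)=\alpha$ if $A$ heads no member of Inst-$\mathcal P$, and $=(v\bigtriangleup w)(B)$ if $A\leftarrow B\in$ Inst-$\mathcal P$. $\Psi'^{\alpha}_{\mathcal P}(v)$ is the $\le_t$-least (resp. $\le_t$-greatest, $\le_k$-least, $\le_k$-greatest) fixpoint of $x\mapsto\Psi_{\mathcal P}^{\alpha}(x,v)$ when $\alpha=\mathcal F$ (resp. $\mathcal T,\mathcal U,\mathcal I$), obtained as the limit of the transfinite iteration from the constant valuation $\alpha$. For an anti-monotonic $f$ on a complete lattice, the extreme oscillation points are the elements $\mu,\nu$ that are the least and greatest fixpoints of $f\circ f$; they satisfy $f(\mu)=\nu$, $f(\nu)=\mu$, and any $x,y$ with $f(x)=y$, $f(y)=x$ lie between $\mu$ and $\nu$. Here the lattice is $(\mathcal V(\mathcal B),\le_t)$, and $Fix^{\alpha}_{\mathcal F}$, $Fix^{\alpha}_{\mathcal T}$ denote respectively the $\le_t$-least and $\le_t$-greatest fixpoint of $\Psi'^{\alpha}_{\mathcal P}\circ\Psi'^{\alpha}_{\mathcal P}$. *)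

From Stdlib Require Import List Arith Bool ClassicalEpsilon.
Import ListNotations.
Set Implicit Arguments.

(* Tag selecting one of the two orders: Tr = truth order <=_t,
   Kn = knowledge order <=_k. *)
Inductive otag := Tr | Kn.

(* The raw operations of a complete bilattice with negation:
   le o     : the order <=_o,
   inf o S  : infinitary meet of the set S for <=_o
              (inf Tr = /\ (big wedge), inf Kn = (x) (big otimes)),
   sup o S  : infinitary join of S for <=_o
              (sup Tr = \/ (big vee),  sup Kn = (+) (big oplus)),
   neg      : the negation. *)
Record bl_ops := BlOps {
  car : Type;
  le  : otag -> car -> car -> Prop;
  inf : otag -> (car -> Prop) -> car;
  sup : otag -> (car -> Prop) -> car;
  neg : car -> car }.

Definition fam {X I : Type} (a : I -> X) : X -> Prop := fun z => exists i, z = a i.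

Section BLops.
Variable B : bl_ops.
(* binary meet / join: wedge = meet Tr, vee = join Tr,
   otimes = meet Kn, oplus = join Kn *)
Definition meet (o : otag) (x y : car B) : car B := inf B o (fun z => z = x \/ z = y).
Definition join (o : otag) (x y : car B) : car B := sup B o (fun z => z = x \/ z = y).
Definition bin (o : otag) (m : bool) (x y : car B) : car B :=
  if m then join o x y else meet o x y.
Definition big (o : otag) (m : bool) (S : car B -> Prop) : car B :=
  if m then sup B o S else inf B o S.
Definition botT : car B := sup B Tr (fun _ => False).
Definition topT : car B := inf B Tr (fun _ => False).
Definition botK : car B := sup B Kn (fun _ => False).
Definition topK : car B := inf B Kn (fun _ => False).
End BLops.

Record is_bilattice (B : bl_ops) : Prop := {
  le_refl    : forall o x, le B o x x;
  le_trans   : forall o x y z, le B o x y -> le B o y z -> le B o x z;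
  le_antisym : forall o x y, le B o x y -> le B o y x -> x = y;
  inf_lb  : forall o S x, S x -> le B o (inf B o S) x;
  inf_glb : forall o S y, (forall x, S x -> le B o y x) -> le B o y (inf B o S);
  sup_ub  : forall o S x, S x -> le B o x (sup B o S);
  sup_lub : forall o S y, (forall x, S x -> le B o x y) -> le B o (sup B o S) y;
  neg_invol : forall x, neg B (neg B x) = x;
  neg_leT   : forall x y, le B Tr x y -> le B Tr (neg B y) (neg B x);
  neg_leK   : forall x y, le B Kn x y -> le B Kn (neg B x) (neg B y);
  (* infinite distributivity: every binary operation distributes over every
     other infinitary operation (nonempty families) *)
  distr : forall (o1 : otag) (m1 : bool) (o2 : otag) (m2 : bool),
      (o1, m1) <> (o2, m2) ->
      forall (I : Type) (a : I -> car B) (x : car B), inhabited I ->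
      bin B o1 m1 x (big B o2 m2 (fam a))
      = big B o2 m2 (fam (fun i => bin B o1 m1 x (a i)));
  (* infinitary interlacing: all infinitary operations are monotone
     with respect to both orders *)
  interlace : forall (o : otag) (m : bool) (o' : otag) (I : Type) (a b : I -> car B),
      (forall i, le B o' (a i) (b i)) ->
      le B o' (big B o m (fam a)) (big B o m (fam b)) }.

Section Fitting.
Variables (Fn Pr : Type) (arF : Fn -> nat) (arP : Pr -> nat).

Inductive term : Type :=
| Var (n : nat)
| App (f : Fn) (l : list term).

Fixpoint twf (t : term) : bool :=
  match t with
  | Var _ => true
  | App f l => Nat.eqb (length l) (arF f) && forallb twf l
  end.

Fixpoint cwf (t : term) : bool :=
  match t with
  | Var _ => false
  | App f l => Nat.eqb (length l) (arF f) && forallb cwf l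
  end.

Fixpoint occurs (x : nat) (t : term) : bool :=
  match t with
  | Var n => Nat.eqb n x
  | App _ l => existsb (occurs x) l
  end.

Fixpoint tsubst (s : nat -> term) (t : term) : term :=
  match t with
  | Var n => s n
  | App f l => App f (map (tsubst s) l)
  end.

(* Formulas, with constants from C (the bilattice elements).
   FPos p ts = the atom p(ts), FNeg p ts = its negation; FEq/FNeq are the
   built-in predicate equal(s,t) and its negation. *)
Inductive formula (C : Type) : Type :=
| FPos (p : Pr) (ts : list term)
| FNeg (p : Pr) (ts : list term)
| FConst (c : C)
| FEq (s t : term)
| FNeq (s t : term)
| FAnd (a b : formula C)
| FOr (a b : formula C)
| FOtimes (a b : formula C)
| FOplus (a b : formula C)
| FEx (x : nat) (a : formula C)
| FAll (x : nat) (a : formula C).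
Arguments FPos {C}. Arguments FNeg {C}. Arguments FConst {C}. Arguments FEq {C}.
Arguments FNeq {C}. Arguments FAnd {C}. Arguments FOr {C}. Arguments FOtimes {C}.
Arguments FOplus {C}. Arguments FEx {C}. Arguments FAll {C}.

Fixpoint fwf {C} (φ : formula C) : bool :=
  match φ with
  | FPos p ts | FNeg p ts => Nat.eqb (length ts) (arP p) && forallb twf ts
  | FConst _ => true
  | FEq s t | FNeq s t => twf s && twf t
  | FAnd a b | FOr a b | FOtimes a b | FOplus a b => fwf a && fwf b
  | FEx x a | FAll x a => fwf a
  end.

Fixpoint free_in {C} (x : nat) (φ : formula C) : bool :=
  match φ with
  | FPos _ ts | FNeg _ ts => existsb (occurs x) ts
  | FConst _ => false
  | FEq s t | FNeq s t => occurs x s || occurs x t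
  | FAnd a b | FOr a b | FOtimes a b | FOplus a b => free_in x a || free_in x b
  | FEx y a | FAll y a => negb (Nat.eqb y x) && free_in x a
  end.

Record gatom := GAtom {
  gpred : Pr;
  gargs : list term;
  gatom_wf : Nat.eqb (length gargs) (arP gpred) && forallb cwf gargs = true }.

(* Since no predicate letter heads more than one clause,
   a program is given by a partial map from predicate letters P to the body
   φ of the (unique) clause  P(x_0,...,x_{n-1}) <- φ  (n = arity of P;
   the head variables are, w.l.o.g., the variables 0,...,n-1). *)
Record program (C : Type) := Program {
  clause : Pr -> option (formula C);
  prog_finite : exists l : list Pr, forall p, clause p <> None -> In p l;
  prog_wf : forall p φ, clause p = Some φ -> fwf φ = true;
  prog_closed : forall p φ x, clause p = Some φ -> free_in x φ = true -> x < arP p }.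

Variable B : bl_ops.

Definition valuation := gatom -> car B.

Definition leV (o : otag) (v w : valuation) : Prop := forall A, le B o (v A) (w A).
Definition infV (o : otag) (S : valuation -> Prop) : valuation :=
  fun A => inf B o (fun z => exists v, S v /\ z = v A).
Definition supV (o : otag) (S : valuation -> Prop) : valuation :=
  fun A => sup B o (fun z => exists v, S v /\ z = v A).

Definition atomval (v : valuation) (p : Pr) (ts : list term) : car B :=
  match Nat.eqb (length ts) (arP p) && forallb cwf ts as b
        return (Nat.eqb (length ts) (arP p) && forallb cwf ts = b -> car B) with
  | true => fun h => v (GAtom p ts h)
  | false => fun _ => botT B   (* never used for well-formed closed formulas *)
  end eq_refl.

Definition eqval (s t : term) : car B :=
  if excluded_middle_informative (s = t) then topT B else botT B.

Definition upd (σ : nat -> term) (x : nat) (t : term) : nat -> term :=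
  fun n => if Nat.eqb n x then t else σ n.

(* (v contrajoin w)(φ σ): the value of the closed formula obtained from φ by
   substituting the closed terms σ(x) for its free variables x
   (substitution is carried along and performed at the atoms). *)
Fixpoint ceval (v w : valuation) (σ : nat -> term) (φ : formula (car B)) : car B :=
  match φ with
  | FPos p ts => atomval v p (map (tsubst σ) ts)
  | FNeg p ts => neg B (atomval w p (map (tsubst σ) ts))
  | FConst c => c
  | FEq s t => eqval (tsubst σ s) (tsubst σ t)
  | FNeq s t => neg B (eqval (tsubst σ s) (tsubst σ t))
  | FAnd a b => meet B Tr (ceval v w σ a) (ceval v w σ b)
  | FOr a b => join B Tr (ceval v w σ a) (ceval v w σ b)
  | FOtimes a b => meet B Kn (ceval v w σ a) (ceval v w σ b)
  | FOplus a b => join B Kn (ceval v w σ a) (ceval v w σ b)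
  | FEx x a => sup B Tr (fun z => exists t, cwf t = true /\ z = ceval v w (upd σ x t) a)
  | FAll x a => inf B Tr (fun z => exists t, cwf t = true /\ z = ceval v w (upd σ x t) a)
  end.

(* the substitution x_i := t_i producing the ground instance with head A *)
Definition inst_env (A : gatom) : nat -> term := fun i => nth i (gargs A) (Var i).

Definition Psi (α : car B) (P : program (car B)) (v w : valuation) : valuation :=
  fun A => match clause P (gpred A) with
           | Some φ => ceval v w (inst_env A) φ
           | None => α
           end.

Inductive corner := cF | cT | cU | cI.
Definition cval (a : corner) : car B :=
  match a with cF => botT B | cT => topT B | cU => botK B | cI => topK B end.

Definition lfpV (o : otag) (f : valuation -> valuation) : valuation :=
  infV o (fun x => leV o (f x) x).
Definition gfpV (o : otag) (f : valuation -> valuation) : valuation :=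
  supV o (fun x => leV o x (f x)).

Definition Psi' (a : corner) (P : program (car B)) (v : valuation) : valuation :=
  let f := fun x => Psi (cval a) P x v in
  match a with
  | cF => lfpV Tr f
  | cT => gfpV Tr f
  | cU => lfpV Kn f
  | cI => gfpV Kn f
  end.

End Fitting.

Definition antimonotone {X : Type} (le : X -> X -> Prop) (f : X -> X) : Prop :=
  forall x y, le x y -> le (f y) (f x).

Definition extreme_oscillation_points {X : Type} (le : X -> X -> Prop)
    (f : X -> X) (mu nu : X) : Prop :=
  (f (f mu) = mu /\ forall x, f (f x) = x -> le mu x) /\
  (f (f nu) = nu /\ forall x, f (f x) = x -> le x nu) /\
  f mu = nu /\ f nu = mu /\
  (forall x y, f x = y -> f y = x -> le mu x /\ le x nu /\ le mu y /\ le y nu).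

From Stdlib Require Import Bool List FunctionalExtensionality.

(* Psi^alpha_P(v, w) is monotone in v for both orders and, since negation
   reverses <=_t, antitone in w for <=_t.  So each Psi'^alpha_P(w) is an
   extreme fixpoint of a monotone map, and raising w lowers that map in the
   truth order.  For alpha = F, T this immediately makes Psi'^alpha_P
   <=_t-antitone.  For alpha = U, I the fixpoint is taken in <=_k, and the
   relation <=_t is transported to it because, by interlacing, <=_k-suprema
   (and infima) preserve <=_t.  Then Psi' o Psi' is <=_t-monotone and its
   Knaster-Tarski least and greatest fixpoints are the extreme oscillation
   points of Psi'. *)

Section LeastPrefixpointTransfer.

Variables (X : Type) (le : X -> X -> Prop) (sup : forall I : Type, (I -> X) -> X).
Hypotheses
  (le_tr : forall x y z, le x y -> le y z -> le x z)
  (le_asym : forall x y, le x y -> le y x -> x = y)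
  (sup_upper : forall I (a : I -> X) i, le (a i) (sup I a))
  (sup_least : forall I (a : I -> X) y, (forall i, le (a i) y) -> le (sup I a) y).

Definition least_prefixpoint (f : X -> X) (L : X) : Prop :=
  le (f L) L /\ forall x, le (f x) x -> le L x.

Variable R : X -> X -> Prop.
Hypothesis R_sup :
  forall I (a b : I -> X), (forall i, R (a i) (b i)) -> R (sup I a) (sup I b).
Variables g h : X -> X.
Hypotheses
  (g_mono : forall x y, le x y -> le (g x) (g y))
  (h_mono : forall x y, le x y -> le (h x) (h y))
  (gh_R : forall x y, R x y -> R (g x) (h y)).

Lemma least_prefixpoint_rel (L M : X) :
  least_prefixpoint g L -> least_prefixpoint h M -> R L M.
Proof.
  intros [gL L_least] [hM M_least].
  (* The supremum (s1, s2) of the R-related pairs of post-fixpoints below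
     (L, M) is R-related, and so is its image, which lies again below (L, M);
     hence (s1, s2) is a fixpoint pair, i.e. (L, M). *)
  pose (I := {xy : X * X | R (fst xy) (snd xy) /\ le (fst xy) (g (fst xy)) /\
                           le (snd xy) (h (snd xy)) /\ le (fst xy) L /\ le (snd xy) M}).
  pose (s1 := sup I (fun i => fst (proj1_sig i))).
  pose (s2 := sup I (fun i => snd (proj1_sig i))).
  assert (s1_upper : forall i : I, le (fst (proj1_sig i)) s1)
    by (intros i; exact (sup_upper I (fun j => fst (proj1_sig j)) i)).
  assert (s2_upper : forall i : I, le (snd (proj1_sig i)) s2)
    by (intros i; exact (sup_upper I (fun j => snd (proj1_sig j)) i)).
  assert (R_s : R s1 s2) by (apply R_sup; intros [xy Hxy]; apply Hxy).
  assert (s1_post : le s1 (g s1)).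
  { apply sup_least; intros i; destruct (proj2_sig i) as (_ & Hg & _).
    eapply le_tr; [exact Hg | apply g_mono, s1_upper]. }
  assert (s2_post : le s2 (h s2)).
  { apply sup_least; intros i; destruct (proj2_sig i) as (_ & _ & Hh & _).
    eapply le_tr; [exact Hh | apply h_mono, s2_upper]. }
  assert (s1_L : le s1 L).
  { apply sup_least; intros i; destruct (proj2_sig i) as (_ & _ & _ & HL & _); exact HL. }
  assert (s2_M : le s2 M).
  { apply sup_least; intros i; destruct (proj2_sig i) as (_ & _ & _ & _ & HM); exact HM. }
  assert (image_in : R (g s1) (h s2) /\ le (g s1) (g (g s1)) /\ le (h s2) (h (h s2)) /\
                     le (g s1) L /\ le (h s2) M).
  { repeat split; auto.
    - eapply le_tr; [apply g_mono, s1_L | exact gL].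
    - eapply le_tr; [apply h_mono, s2_M | exact hM]. }
  pose (i := exist _ (g s1, h s2) image_in : I).
  replace L with s1 by (apply le_asym; [exact s1_L | apply L_least, (s1_upper i)]).
  replace M with s2 by (apply le_asym; [exact s2_M | apply M_least, (s2_upper i)]).
  exact R_s.
Qed.

End LeastPrefixpointTransfer.

Set Implicit Arguments.

Section Oscillation.

Variables (X : Type) (le : X -> X -> Prop) (f : X -> X).
Hypotheses
  (le_asym : forall x y, le x y -> le y x -> x = y)
  (f_anti : antimonotone le f).

Lemma extreme_oscillation_pointsI (mu nu : X) :
  f (f mu) = mu -> (forall x, f (f x) = x -> le mu x) ->
  f (f nu) = nu -> (forall x, f (f x) = x -> le x nu) ->
  extreme_oscillation_points le f mu nu.
Proof.
  intros mu_fix mu_least nu_fix nu_greatest.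
  assert (f_mu : f mu = nu).
  { apply le_asym.
    - apply nu_greatest; rewrite mu_fix; reflexivity.
    - rewrite <- nu_fix at 1; apply f_anti, mu_least; rewrite nu_fix; reflexivity. }
  assert (f_nu : f nu = mu) by (rewrite <- f_mu; exact mu_fix).
  refine (conj (conj mu_fix mu_least) (conj (conj nu_fix nu_greatest)
                 (conj f_mu (conj f_nu _)))).
  intros x y fx fy.
  assert (x_fix : f (f x) = x) by (rewrite fx; exact fy).
  assert (y_fix : f (f y) = y) by (rewrite fy; exact fx).
  repeat split; auto.
Qed.

Lemma extreme_oscillation_points_le (mu nu : X) :
  extreme_oscillation_points le f mu nu -> le mu nu.
Proof.
  intros (_ & _ & f_mu & f_nu & between).
  apply (between mu nu f_mu f_nu).
Qed.

End Oscillation.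

Section Fitting.

Variables (Fn Pr : Type) (arF : Fn -> nat) (arP : Pr -> nat) (B : bl_ops).
Hypothesis HB : is_bilattice B.

Lemma big_ext o m (S S' : car B -> Prop) :
  (forall z, S z <-> S' z) -> big B o m S = big B o m S'.
Proof.
  intros SS'; apply (le_antisym HB o); destruct m; simpl.
  - apply (sup_lub HB); intros x Sx; apply (sup_ub HB), SS', Sx.
  - apply (inf_glb HB); intros x S'x; apply (inf_lb HB), SS', S'x.
  - apply (sup_lub HB); intros x S'x; apply (sup_ub HB), SS', S'x.
  - apply (inf_glb HB); intros x Sx; apply (inf_lb HB), SS', Sx.
Qed.

Lemma big_image_le o m o' I (a b : I -> car B) (S S' : car B -> Prop) :
  (forall z, S z <-> fam a z) -> (forall z, S' z <-> fam b z) ->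
  (forall i, le B o' (a i) (b i)) -> le B o' (big B o m S) (big B o m S').
Proof.
  intros Sa S'b ab; rewrite (big_ext o m _ _ Sa), (big_ext o m _ _ S'b).
  apply (interlace HB), ab.
Qed.

Lemma bin_le o m o' x y x' y' :
  le B o' x x' -> le B o' y y' -> le B o' (bin B o m x y) (bin B o m x' y').
Proof.
  intros xx' yy'.
  assert (pair_image : forall u v z : car B,
            z = u \/ z = v <-> fam (fun c : bool => if c then u else v) z).
  { intros u v z; split.
    - intros [-> | ->]; [exists true | exists false]; reflexivity.
    - intros [[|] ->]; auto. }
  change (le B o' (big B o m (fun z => z = x \/ z = y))
                  (big B o m (fun z => z = x' \/ z = y'))).
  apply big_image_le with (1 := pair_image x y) (2 := pair_image x' y').
  intros [|]; assumption.
Qed.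

Lemma big_closed_terms_le o m o' (F G : term Fn -> car B) :
  (forall t, cwf arF t = true -> le B o' (F t) (G t)) ->
  le B o' (big B o m (fun z => exists t, cwf arF t = true /\ z = F t))
          (big B o m (fun z => exists t, cwf arF t = true /\ z = G t)).
Proof.
  intros FG.
  assert (closed_image : forall (H : term Fn -> car B) z,
            (exists t, cwf arF t = true /\ z = H t) <->
            fam (fun t : {t | cwf arF t = true} => H (proj1_sig t)) z).
  { intros H z; split.
    - intros [t [Ht ->]]; exists (exist _ t Ht); reflexivity.
    - intros [[t Ht] ->]; exists t; auto. }
  apply big_image_le with (1 := closed_image F) (2 := closed_image G).
  intros [t Ht]; apply FG, Ht.
Qed.

Notation V := (valuation arF arP B).

Lemma atomval_spec (p : Pr) (ts : list (term Fn)) :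
  {A : gatom arF arP | forall v : V, atomval v p ts = v A} +
  {forall v : V, atomval v p ts = botT B}.
Proof.
  unfold atomval.
  set (wf := Nat.eqb (length ts) (arP p) && forallb (cwf arF) ts).
  generalize (eq_refl wf).
  (* abstract the right side of the equation and the two scrutinees, but not
     the types of the branches, which must keep [wf] *)
  generalize wf at 2 3 7.
  intros [|] h.
  - left; eexists; reflexivity.
  - right; reflexivity.
Qed.

Lemma atomval_rel (Rel : car B -> car B -> Prop) (v v' : V) p ts :
  Rel (botT B) (botT B) -> (forall A, Rel (v A) (v' A)) ->
  Rel (atomval v p ts) (atomval v' p ts).
Proof.
  intros Rbot Rvv'.
  destruct (atomval_spec p ts) as [[A HA] | Hbot].
  - rewrite !HA; apply Rvv'.
  - rewrite !Hbot; exact Rbot.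
Qed.

Lemma ceval_le o (v v' w w' : V) :
  leV o v v' -> (forall A, le B o (neg B (w A)) (neg B (w' A))) ->
  forall φ σ, le B o (ceval v w σ φ) (ceval v' w' σ φ).
Proof.
  intros vv' ww' φ; induction φ; intros σ; simpl.
  - apply atomval_rel; [apply (le_refl HB) | exact vv'].
  - apply (atomval_rel (fun x y => le B o (neg B x) (neg B y)));
      [apply (le_refl HB) | exact ww'].
  - apply (le_refl HB).
  - apply (le_refl HB).
  - apply (le_refl HB).
  - exact (bin_le Tr false o _ _ _ _ (IHφ1 σ) (IHφ2 σ)).
  - exact (bin_le Tr true o _ _ _ _ (IHφ1 σ) (IHφ2 σ)).
  - exact (bin_le Kn false o _ _ _ _ (IHφ1 σ) (IHφ2 σ)).
  - exact (bin_le Kn true o _ _ _ _ (IHφ1 σ) (IHφ2 σ)).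
  - exact (big_closed_terms_le Tr true o _ _ (fun t _ => IHφ _)).
  - exact (big_closed_terms_le Tr false o _ _ (fun t _ => IHφ _)).
Qed.

Lemma Psi_le o α P (v v' w w' : V) :
  leV o v v' -> (forall A, le B o (neg B (w A)) (neg B (w' A))) ->
  leV o (Psi α P v w) (Psi α P v' w').
Proof.
  intros vv' ww' A; unfold Psi.
  destruct (clause P (gpred A)); [apply ceval_le; assumption | apply (le_refl HB)].
Qed.

Lemma leV_refl o (v : V) : leV o v v.
Proof. intros A; apply (le_refl HB). Qed.

Lemma leV_trans o (u v w : V) : leV o u v -> leV o v w -> leV o u w.
Proof. intros uv vw A; apply (le_trans HB) with (v A); auto. Qed.

Lemma leV_antisym o (u v : V) : leV o u v -> leV o v u -> u = v.
Proof.
  intros uv vu; apply functional_extensionality; intros A.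
  apply (le_antisym HB o); auto.
Qed.

Definition monoV o (f : V -> V) : Prop := forall x y, leV o x y -> leV o (f x) (f y).

Lemma lfpV_le o (f : V -> V) x : leV o (f x) x -> leV o (lfpV o f) x.
Proof. intros fx A; apply (inf_lb HB); exists x; auto. Qed.

Lemma lfpV_pre o (f : V -> V) : monoV o f -> leV o (f (lfpV o f)) (lfpV o f).
Proof.
  intros f_mono A; apply (inf_glb HB); intros z [x [fx ->]].
  apply (leV_trans (f_mono _ _ (lfpV_le f fx)) fx).
Qed.

Lemma lfpV_fix o (f : V -> V) : monoV o f -> f (lfpV o f) = lfpV o f.
Proof.
  intros f_mono; apply leV_antisym with o; [apply lfpV_pre, f_mono |].
  apply lfpV_le, f_mono, lfpV_pre, f_mono.
Qed.

Lemma lfpV_le_fix o (f : V -> V) x : f x = x -> leV o (lfpV o f) x.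
Proof. intros fx; apply lfpV_le; rewrite fx; apply leV_refl. Qed.

Lemma gfpV_ge o (f : V -> V) x : leV o x (f x) -> leV o x (gfpV o f).
Proof. intros xf A; apply (sup_ub HB); exists x; auto. Qed.

Lemma gfpV_post o (f : V -> V) : monoV o f -> leV o (gfpV o f) (f (gfpV o f)).
Proof.
  intros f_mono A; apply (sup_lub HB); intros z [x [xf ->]].
  apply (leV_trans xf (f_mono _ _ (gfpV_ge f xf))).
Qed.

Lemma gfpV_fix o (f : V -> V) : monoV o f -> f (gfpV o f) = gfpV o f.
Proof.
  intros f_mono; apply leV_antisym with o; [| apply gfpV_post, f_mono].
  apply gfpV_ge, f_mono, gfpV_post, f_mono.
Qed.

Lemma gfpV_ge_fix o (f : V -> V) x : f x = x -> leV o x (gfpV o f).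
Proof. intros fx; apply gfpV_ge; rewrite fx; apply leV_refl. Qed.

Lemma lfpV_transfer_Tr o (g h : V -> V) :
  monoV o g -> monoV o h -> (forall x y, leV Tr x y -> leV Tr (g x) (h y)) ->
  leV Tr (lfpV o g) (lfpV o h).
Proof.
  intros g_mono h_mono gh.
  apply least_prefixpoint_rel with
    (le := leV o) (sup := fun I a A => sup B o (fam (fun i => a i A))) (g := g) (h := h).
  - apply leV_trans.
  - apply leV_antisym.
  - intros I a i A; apply (sup_ub HB); exists i; reflexivity.
  - intros I a y ay A; apply (sup_lub HB); intros z [i ->]; apply ay.
  - intros I a b ab A; exact (interlace HB o true Tr _ _ (fun i => ab i A)).
  - exact g_mono.
  - exact h_mono.
  - exact gh.
  - split; [apply lfpV_pre, g_mono | apply lfpV_le].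
  - split; [apply lfpV_pre, h_mono | apply lfpV_le].
Qed.

(* [gfpV o g] is the least prefixpoint of [g] for the dual of [leV o], whose
   suprema are the pointwise [inf B o]. *)
Lemma gfpV_transfer_Tr o (g h : V -> V) :
  monoV o g -> monoV o h -> (forall x y, leV Tr x y -> leV Tr (g x) (h y)) ->
  leV Tr (gfpV o g) (gfpV o h).
Proof.
  intros g_mono h_mono gh.
  apply least_prefixpoint_rel with
    (le := fun x y => leV o y x) (sup := fun I a A => inf B o (fam (fun i => a i A)))
    (g := g) (h := h).
  - intros x y z xy yz; apply (leV_trans yz xy).
  - intros x y xy yx; apply (leV_antisym yx xy).
  - intros I a i A; apply (inf_lb HB); exists i; reflexivity.
  - intros I a y ay A; apply (inf_glb HB); intros z [i ->]; apply ay.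
  - intros I a b ab A; exact (interlace HB o false Tr _ _ (fun i => ab i A)).
  - intros x y yx; apply g_mono, yx.
  - intros x y yx; apply h_mono, yx.
  - exact gh.
  - split; [apply gfpV_post, g_mono | apply gfpV_ge].
  - split; [apply gfpV_post, h_mono | apply gfpV_ge].
Qed.

Lemma Psi'_antitone (P : program arF arP (car B)) (a : corner) :
  antimonotone (leV Tr) (Psi' a P).
Proof.
  intros x y xy.
  assert (mono : forall o v, monoV o (fun u => Psi (cval B a) P u v)).
  { intros o v u u' uu'; apply Psi_le; [exact uu' | intros A; apply (le_refl HB)]. }
  assert (cross : forall u u', leV Tr u u' ->
                    leV Tr (Psi (cval B a) P u y) (Psi (cval B a) P u' x)).
  { intros u u' uu'; apply Psi_le; [exact uu' | intros A; apply (neg_leT HB), xy]. }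
  destruct a; unfold Psi'.
  - apply lfpV_transfer_Tr; auto.
  - apply gfpV_transfer_Tr; auto.
  - apply lfpV_transfer_Tr; auto.
  - apply gfpV_transfer_Tr; auto.
Qed.

End Fitting.

Theorem proposition2 (Fn Pr : Type) (arF : Fn -> nat) (arP : Pr -> nat)
    (B : bl_ops) (HB : is_bilattice B)
    (P : program arF arP (car B)) (a : corner) :
  antimonotone (@leV Fn Pr arF arP B Tr) (@Psi' Fn Pr arF arP B a P) /\
  exists FixF FixT : valuation arF arP B,
    extreme_oscillation_points (@leV Fn Pr arF arP B Tr) (@Psi' Fn Pr arF arP B a P)
      FixF FixT /\
    @leV Fn Pr arF arP B Tr FixF FixT.
Proof.
  pose proof (Psi'_antitone HB P a) as f_anti.
  set (f := Psi' a P) in *.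
  set (ff := fun v => f (f v)).
  assert (ff_mono : monoV Tr ff) by (intros u v uv; apply f_anti, f_anti, uv).
  assert (osc : extreme_oscillation_points (leV Tr) f (lfpV Tr ff) (gfpV Tr ff)).
  { apply extreme_oscillation_pointsI; [apply leV_antisym, HB | exact f_anti | ..].
    - exact (lfpV_fix HB ff_mono).
    - intros v v_fix; apply (lfpV_le_fix HB), v_fix.
    - exact (gfpV_fix HB ff_mono).
    - intros v v_fix; apply (gfpV_ge_fix HB), v_fix. }
  split; [exact f_anti |].
  exists (lfpV Tr ff), (gfpV Tr ff).
  split; [exact osc | exact (extreme_oscillation_points_le osc)].
Qed.
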